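(* Let $I\ge 1$ and let $\Delta_{>0}=\{P=(p_{i,j})_{1\le i,j\le I}: p_{i,j}>0,\ \sum_{i,j}p_{i,j}=1\}$. Then $\mathcal{M}_2\cap\Delta_{>0}\subseteq\mathcal{M}_1\cap\Delta_{>0}$.
   Context: $\mathcal{M}_1$ is the set of $I\times I$ matrices $P$ with non-negative entries summing to $1$ such that there exist non-negative vectors $\zeta^{(r)},\zeta^{(c)},\zeta^{(\gamma)}\in\mathbb{R}^I_{\ge 0}$ with $p_{i,j}=\zeta^{(r)}_i\zeta^{(c)}_j$ for $i\ne j$ and $p_{i,i}=\zeta^{(r)}_i\zeta^{(c)}_i\zeta^{(\gamma)}_i$. $\mathcal{M}_2$ is the set of $I\times I$ matrices of the form $P=\alpha cr^t+(1-\alpha)D$, where $r,c\in\mathbb{R}^I_{\ge0}$ each have entries summing to $1$, $D=\mathrm{diag}(d_1,\dots,d_I)$ with $d_i\ge0$ and $\sum_i d_i=1$, and $\alpha\in[0,1]$. *)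

From mathcomp Require Import all_boot all_order all_algebra.
Set Implicit Arguments. Unset Strict Implicit. Unset Printing Implicit Defensive.
Import Order.TTheory GRing.Theory Num.Theory.
Local Open Scope ring_scope.

Definition Delta_pos (R : realFieldType) (I : nat) (P : 'M[R]_I) : Prop :=
  (forall i j, 0 < P i j) /\ \sum_(i < I) \sum_(j < I) P i j = 1.

Definition M1 (R : realFieldType) (I : nat) (P : 'M[R]_I) : Prop :=
  (forall i j, 0 <= P i j) /\ \sum_(i < I) \sum_(j < I) P i j = 1 /\
  exists zr zc zg : 'I_I -> R,
    (forall i, 0 <= zr i) /\ (forall i, 0 <= zc i) /\ (forall i, 0 <= zg i) /\
    (forall i j, i != j -> P i j = zr i * zc j) /\
    (forall i, P i i = zr i * zc i * zg i).

Definition M2 (R : realFieldType) (I : nat) (P : 'M[R]_I) : Prop :=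
  exists (r c d : 'I_I -> R) (alpha : R),
    (forall i, 0 <= r i) /\ \sum_(i < I) r i = 1 /\
    (forall i, 0 <= c i) /\ \sum_(i < I) c i = 1 /\
    (forall i, 0 <= d i) /\ \sum_(i < I) d i = 1 /\
    0 <= alpha <= 1 /\
    (forall i j, P i j = alpha * (c i * r j) + (1 - alpha) * (if i == j then d i else 0)).

From mathcomp Require Import all_boot all_order all_algebra.
Import Order.TTheory GRing.Theory Num.Theory.
Local Open Scope ring_scope.

(* Off the diagonal an M_2 matrix is the rank-one matrix (alpha c) r^t.  When
   I >= 2 every row and every column meets the off-diagonal part, so positivity
   of P forces alpha c_i > 0 and r_j > 0; the diagonal is then matched by
   zeta_gamma_i = p_ii / (alpha c_i r_i).  For I = 1 there is no off-diagonal
   condition at all. *)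

Lemma exists_neq_ord {n : nat} : (1 < n)%N -> forall i : 'I_n, exists j, i != j.
Proof.
move=> n_gt1 i; have n_gt0 := ltnW n_gt1.
have [->|i_neq] := eqVneq i (Ordinal n_gt1); last by exists (Ordinal n_gt1).
by exists (Ordinal n_gt0); apply/eqP => /(congr1 val).
Qed.

Lemma pmul_ge0_gt0 {R : numDomainType} {x y : R} :
  0 <= x -> 0 <= y -> 0 < x * y -> 0 < x /\ 0 < y.
Proof.
move=> x0 y0 /lt0r_neq0; rewrite mulf_eq0 negb_or => /andP[xn0 yn0].
by rewrite !lt0r xn0 yn0 x0 y0.
Qed.

Section OffDiagonalFactor.
Context {R : realFieldType} {n : nat} {P : 'M[R]_n} {a b : 'I_n -> R}.
Hypothesis P_gt0 : forall i j, 0 < P i j.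
Hypothesis P_offdiag : forall i j, i != j -> P i j = a i * b j.

Lemma offdiag_factor_gt0 :
  (1 < n)%N -> (forall i, 0 <= a i) -> (forall j, 0 <= b j) ->
  (forall i, 0 < a i) /\ (forall j, 0 < b j).
Proof.
move=> n_gt1 a0 b0; split.
- move=> i; have [j ij] := exists_neq_ord n_gt1 i.
  by have := P_gt0 i j; rewrite P_offdiag // => /(pmul_ge0_gt0 (a0 i) (b0 j))[].
- move=> j; have [i ji] := exists_neq_ord n_gt1 j.
  have := P_gt0 i j; rewrite P_offdiag 1?eq_sym //.
  by move=> /(pmul_ge0_gt0 (a0 i) (b0 j))[].
Qed.

Lemma M1_offdiag_factor :
  \sum_(i < n) \sum_(j < n) P i j = 1 ->
  (forall i, 0 < a i) -> (forall j, 0 < b j) -> M1 P.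
Proof.
move=> P_sum a_gt0 b_gt0; have ab_gt0 i : 0 < a i * b i by exact: mulr_gt0.
split; first by move=> i j; exact: ltW.
split=> //; exists a, b, (fun i => P i i / (a i * b i)).
split; first by move=> i; exact: ltW.
split; first by move=> j; exact: ltW.
split; first by move=> i; apply: ltW; rewrite divr_gt0.
split=> // i; by rewrite mulrC divfK // lt0r_neq0.
Qed.

End OffDiagonalFactor.

Lemma M2_offdiag {R : realFieldType} {n : nat} {P : 'M[R]_n}
    {r c d : 'I_n -> R} {alpha : R} :
  (forall i j, P i j = alpha * (c i * r j) + (1 - alpha) * (if i == j then d i else 0)) ->
  forall i j, i != j -> P i j = alpha * c i * r j.
Proof. by move=> HP i j ij; rewrite HP (negbTE ij) mulr0 addr0 mulrA. Qed.

Theorem proposition3p7 (R : realFieldType) (I : nat) (HI : (1 <= I)%N) (P : 'M[R]_I) :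
  M2 P /\ Delta_pos P -> M1 P /\ Delta_pos P.
Proof.
move=> [[r [c [d [al [r0 [_ [c0 [_ [_ [_ [/andP[al0 _] HP]]]]]]]]]]] [P_gt0 P_sum]].
split=> //.
have [I1|I_neq1] := eqVneq I 1%N.
  apply: (M1_offdiag_factor (a := fun=> 1) (b := fun=> 1) P_gt0 _ P_sum);
    [|by move=> _; exact: ltr01..].
  by subst I => i j; rewrite (ord1 i) (ord1 j) eqxx.
have I_gt1 : (1 < I)%N by rewrite ltn_neqAle eq_sym I_neq1 HI.
have P_offdiag := M2_offdiag HP.
have [ac_gt0 r_gt0] := offdiag_factor_gt0 P_gt0 P_offdiag I_gt1
  (fun i => mulr_ge0 al0 (c0 i)) r0.
exact: M1_offdiag_factor P_gt0 P_offdiag P_sum ac_gt0 r_gt0.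
Qed.
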